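(* Let $\mathcal N$ be a monotonic max-sum $(\mathrm{Col},\delta)$-GNN with $L$ layers and aggregation parameters $k_1,\dots,k_L$, and let $C_1,\dots,C_L$ be its layer capacities. Let $\mathcal N'$ be the $(\mathrm{Col},\delta)$-GNN obtained from $\mathcal N$ by replacing each $k_\ell$ by $C_\ell$ (i.e. using $\mathrm{maxsum}_{C_\ell}$ as aggregation in layer $\ell$), leaving everything else unchanged. Then $T_{\mathcal N}(D)=T_{\mathcal N'}(D)$ for every $(\mathrm{Col},\delta)$-dataset $D$.
   Context: Graphs and GNNs. For a finite set of colours $\mathrm{Col}$ and $\delta\in\mathbb N$, a $(\mathrm{Col},\delta)$-graph is $G=\langle V,\{E^c\}_{c\in\mathrm{Col}},\lambda\rangle$ where $V$ is a finite set of vertices, $E^c\subseteq V\times V$ for each colour $c$, and $\lambda$ assigns to each $v\in V$ a feature vector $\mathbf v\in\mathbb R^\delta$; it is Boolean if all feature entries are in $\{0,1\}$. A $(\mathrm{Col},\delta)$-GNN $\mathcal N$ with $L\ge 1$ layers consists of dimensions $\delta_0=\delta,\delta_1,\dots,\delta_{L-1},\delta_L=\delta$; real matrices $A_\ell$ and $B_\ell^c$ of size $\delta_\ell\times\delta_{\ell-1}$ and bias vectors $b_\ell\in\mathbb R^{\delta_\ell}$ for $1\le\ell\le L$, $c\in\mathrm{Col}$; aggregation functions $\mathrm{agg}_\ell$ from finite real multisets to $\mathbb R$ (applied componentwise to finite multisets of vectors); an activation function $\sigma:\mathbb R\to\mathbb R$ and a classification function $\mathrm{cls}:\mathbb R\to\{0,1\}$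 (both applied componentwise). Applying $\mathcal N$ to $G$ produces labellings $\lambda_0=\lambda,\lambda_1,\dots,\lambda_L$ where, writing $\mathbf v_\ell$ for the vector of $v$ under $\lambda_\ell$, $\mathbf v_\ell=\sigma\big(A_\ell\mathbf v_{\ell-1}+\sum_{c\in\mathrm{Col}}B_\ell^c\,\mathrm{agg}_\ell(\{\!\{\mathbf u_{\ell-1}\mid (v,u)\in E^c\}\!\})+b_\ell\big)$. The result $\mathcal N(G)$ is the Boolean graph with the same vertices and edges where each $v$ is labelled by $\mathrm{cls}(\mathbf v_L)$. Canonical transformation. The $(\mathrm{Col},\delta)$-signature consists of a binary predicate $E^c$ for each $c\in\mathrm{Col}$ and unary predicates $U_1,\dots,U_\delta$; a $(\mathrm{Col},\delta)$-dataset is a finite set of variable-free atoms (facts) over this signature. Its canonical encoding $\mathrm{enc}(D)$ is the Boolean $(\mathrm{Col},\delta)$-graph with a vertex $v_t$ for each term $t$ occurring in $D$, an edge $(v_t,v_s)\in E^c$ iff $E^c(t,s)\in D$, and feature vectors with $i$-th component $1$ if $U_i(t)\in D$ and $0$ otherwise. The canonical decoding $\mathrm{dec}(G)$ of a Boolean graph whose vertices are of the form $v_t$ contains $E^c(t,s)$ for each edge $(v_t,v_s)\in E^c$ and $U_i(t)$ for each vertex $v_t$ whose $i$-th feature is $1$. Then $T_{\mathcal N}(D)=\mathrm{dec}(\mathcal N(\mathrm{enc}(D)))$. Max-sum aggregation. For $k\in\mathbb N_0\cup\{\infty\}$ and a finite real multiset $S$, let $m=\min(k,|S|)$; $\mathrm{maxsum}_k(S)=0$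 if $m=0$, and otherwise it is the sum of the $m$ largest elements of $S$, counting multiplicities. Monotonic max-sum GNN: a $(\mathrm{Col},\delta)$-GNN such that (i) all entries of every $A_\ell$ and $B_\ell^c$ are nonnegative; (ii) each $\mathrm{agg}_\ell$ is $\mathrm{maxsum}_{k_\ell}$ for some $k_\ell\in\mathbb N_0\cup\{\infty\}$; (iii) $\sigma$ is monotonically increasing, unbounded, and has range $\mathbb R_{\ge0}$; (iv) $\mathrm{cls}$ is a step function with some threshold $t\in\mathbb R$: $\mathrm{cls}(t')=0$ for $t'<t$ and $\mathrm{cls}(t')=1$ for $t'\ge t$. Sets $X_\ell^i$. A $(\mathrm{Col},\ell)$-multiset family $\mathcal Y$ assigns to each $c\in\mathrm{Col}$ a finite multiset $\mathcal Y^c$ of vectors of dimension $\delta_\ell$. For $1\le\ell\le L$, $1\le i\le\delta_\ell$, a vector $\mathbf x$ of dimension $\delta_{\ell-1}$ and a $(\mathrm{Col},\ell-1)$-multiset family $\mathcal Y$, let $\mathrm{Val}_\ell^i(\mathbf x,\mathcal Y)$ be the $i$-th component of $A_\ell\mathbf x+\sum_{c}B_\ell^c\,\mathrm{maxsum}_{k_\ell}(\mathcal Y^c)+b_\ell$. Define $X_0^i=\{0,1\}$ for $1\le i\le\delta_0$, and for $\ell\ge1$ let $X_\ell^i$ be the set of all values $\sigma(\mathrm{Val}_\ell^i(\mathbf x,\mathcal Y))$ where $\mathbf x$ ranges over vectors of dimension $\delta_{\ell-1}$ with $x_j\in X_{\ell-1}^j$ for all $j$, and $\mathcal Y$ ranges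 over $(\mathrm{Col},\ell-1)$-multiset families such that $y_j\in X_{\ell-1}^j$ for all $c$, all $\mathbf y\in\mathcal Y^c$ and all $j$. (Each $X_\ell^i\subseteq\mathbb R_{\ge0}$ and has a least nonzero element whenever it contains a nonzero element.) Capacities. Let $\alpha_L$ be the threshold of $\mathrm{cls}$. For $\ell=L,L-1,\dots,1$ in turn: let $w_\ell$ be the least nonzero entry among all entries of $A_\ell$ and of all $B_\ell^c$, and let $x_\ell$ be the least nonzero number in $\bigcup_i X_{\ell-1}^i$. If $w_\ell$ or $x_\ell$ does not exist, set $C_\ell=C_{\ell-1}=\dots=C_1=0$ and stop. Otherwise let $\beta_\ell$ be the least natural number with $\sigma(\beta_\ell)\ge\alpha_\ell$, let $b_\ell^{\min}$ be the least entry of $b_\ell$, set $C_\ell=\min\big(k_\ell,\lceil(\beta_\ell-b_\ell^{\min})/(w_\ell\cdot x_\ell)\rceil\big)$ and $\alpha_{\ell-1}=(\beta_\ell-b_\ell^{\min})/w_\ell$, and continue with $\ell-1$. The capacity of $\mathcal N$ is $C_{\mathcal N}=\max(C_1,\dots,C_L)$. *)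

From HB Require Import structures.
From mathcomp Require Import all_boot all_order all_algebra.
From mathcomp Require Import boolp classical_sets reals.
Set Implicit Arguments.
Unset Strict Implicit.
Unset Printing Implicit Defensive.
Import Order.TTheory GRing.Theory Num.Theory.
Local Open Scope ring_scope.
Local Open Scope classical_set_scope.

Inductive kpar := KFin of nat | KInf.

Section MaxSum.
Variable R : realType.

(* maxsum_k(S): sum of the min(k,|S|) largest elements (with multiplicity);
   a finite multiset of reals is represented by a list. *)
Definition maxsum (k : kpar) (s : seq R) : R :=
  let s' := sort (fun x y : R => y <= x) s in
  match k with
  | KFin n => \sum_(x <- take n s') x
  | KInf => \sum_(x <- s') x
  end.

Definition aggvec (k : kpar) n (s : seq 'cV[R]_n) : 'cV[R]_n :=
  \col_(j < n) maxsum k [seq (v : 'cV[R]_n) j 0 | v <- s].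
End MaxSum.

(* Layer l+1 (1 <= l+1 <= L) is stored at
   index l : nat; dim l is delta_l.  Aggregation in layer l+1 is
   maxsum_(k l), classification is the step function with threshold thr. *)
Record msgnn (R : realType) (Col : finType) (delta : nat) := MSGNN {
  nL : nat;
  dim : nat -> nat;
  dim0 : dim 0%N = delta;
  dimL : dim nL = delta;
  Amx : forall l : nat, 'M[R]_(dim l.+1, dim l);
  Bmx : forall l : nat, Col -> 'M[R]_(dim l.+1, dim l);
  bias : forall l : nat, 'cV[R]_(dim l.+1);
  kagg : nat -> kpar;
  sigma : R -> R;
  thr : R
}.

Section GNN.
Variables (R : realType) (Col : finType) (delta : nat).
Implicit Type N : msgnn R Col delta.

Definition cls N (t : R) : bool := thr N <= t.

Definition preact N (l : nat) (x : 'cV[R]_(dim N l))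
    (Y : Col -> seq 'cV[R]_(dim N l)) : 'cV[R]_(dim N l.+1) :=
  Amx N l *m x + \sum_(c : Col) (Bmx N l c *m aggvec (kagg N l) (Y c))
  + bias N l.

(* Monotonic max-sum GNN (conditions (i)-(iv); (ii),(iv) are built in). *)
Definition monotonic N : Prop :=
  [/\ forall l, (l < nL N)%N ->
        (forall i j, 0 <= Amx N l i j) /\
        (forall c i j, 0 <= Bmx N l c i j),
      forall x y, x <= y -> sigma N x <= sigma N y,
      forall M : R, exists x, M < sigma N x &
      forall y : R, 0 <= y <-> exists x, sigma N x = y].

Definition with_k N (kk : nat -> kpar) : msgnn R Col delta :=
  @MSGNN R Col delta (nL N) (dim N) (dim0 N) (dimL N) (Amx N) (Bmx N)
    (bias N) kk (sigma N) (thr N).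

Fixpoint Xs N (l : nat) : 'I_(dim N l) -> set R :=
  match l return 'I_(dim N l) -> set R with
  | 0%N => fun _ => [set x : R | x = 0 \/ x = 1]
  | l'.+1 => fun i => [set z | exists (x : 'cV[R]_(dim N l'))
                                 (Y : Col -> seq 'cV[R]_(dim N l')),
        (forall j, @Xs N l' j (x j 0)) /\
        (forall c y, y \in Y c -> forall j, @Xs N l' j (y j 0)) /\
        z = sigma N (@preact N l' x Y i 0)]
  end.

Definition is_least_nz (S : set R) (x : R) : Prop :=
  S x /\ x != 0 /\ forall y, S y -> y != 0 -> x <= y.

Definition least_nz (S : set R) : option R :=
  xget None [set o | exists x, o = Some x /\ is_least_nz S x].

(* least natural number satisfying P (0 if none) *)
Definition least_nat (P : nat -> Prop) : nat :=
  xget 0%N [set n | P n /\ forall m, P m -> (n <= m)%N].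

Definition int2nat (z : int) : nat :=
  match z with Posz n => n | Negz _ => 0%N end.

Definition kmin (k : kpar) (c : nat) : nat :=
  match k with KFin n => minn n c | KInf => c end.

Definition wmin N l : option R :=
  least_nz [set x | (exists i j, Amx N l i j = x) \/
                    (exists c i j, Bmx N l c i j = x)].

Definition xmin N l : option R :=
  least_nz [set x | exists j, @Xs N l j x].

Definition bmin N l : R :=
  xget 0 [set m | (exists i, bias N l i 0 = m) /\ forall i, m <= bias N l i 0].

(* caps N n alpha : the capacities C_1..C_n (as a function of the layer
   number, 1-based), given alpha_n; values outside 1..n are 0. *)
Fixpoint caps N (n : nat) (alpha : R) : nat -> nat :=
  match n with
  | 0%N => fun _ => 0%N
  | n'.+1 =>
    match wmin N n', xmin N n' with
    | Some w, Some x =>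
      let beta := least_nat (fun m => (0 < m)%N /\ alpha <= sigma N m%:R) in
      let b0 := bmin N n' in
      let C := kmin (kagg N n')
                 (int2nat (Num.ceil ((beta%:R - b0) / (w * x)))) in
      let alpha' := (beta%:R - b0) / w in
      fun l => if l == n'.+1 then C else caps N n' alpha' l
    | _, _ => fun _ => 0%N
    end
  end.

Definition capacity N (l : nat) : nat := caps N (nL N) (thr N) l.

Definition capGNN N : msgnn R Col delta :=
  with_k N (fun l => KFin (capacity N l.+1)).

End GNN.

Section Datasets.
Variables (Col : finType) (delta : nat) (Tm : eqType).

Inductive atom :=
  | AE of Col & Tm & Tm
  | AU of 'I_delta & Tm.       (* U_(i+1)(t) *)

Definition atom_terms (a : atom) : seq Tm :=
  match a with AE _ t s => [:: t; s] | AU _ t => [:: t] end.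

(* a dataset: a finite set of facts, given by a list *)
Definition dataset := seq atom.

Definition dterms (D : dataset) : seq Tm := undup (flatten (map atom_terms D)).

Definition isE (c : Col) (t s : Tm) (a : atom) : bool :=
  match a with AE c' t' s' => [&& c' == c, t' == t & s' == s] | _ => false end.
Definition isU (i : 'I_delta) (t : Tm) (a : atom) : bool :=
  match a with AU i' t' => (i' == i) && (t' == t) | _ => false end.

(* enc(D): vertices = terms of D; edges and Boolean features *)
Definition encE (D : dataset) (c : Col) (t s : Tm) : bool := has (isE c t s) D.
Definition encF (R : realType) (D : dataset) (t : Tm) : 'cV[R]_delta :=
  \col_i (if has (isU i t) D then 1 else 0).

Variable R : realType.

Fixpoint lab (N : msgnn R Col delta) (D : dataset) (l : nat)
  : Tm -> 'cV[R]_(dim N l) :=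
  match l return Tm -> 'cV[R]_(dim N l) with
  | 0%N => fun v => castmx (esym (dim0 N), erefl 1%N) (encF R D v)
  | l'.+1 => fun v =>
      map_mx (sigma N)
        (@preact R Col delta N l' (lab N D l' v)
           (fun c => [seq lab N D l' u | u <- dterms D & encE D c v u]))
  end.

Definition TN (N : msgnn R Col delta) (D : dataset) : atom -> bool :=
  fun a => match a with
  | AE c t s => encE D c t s
  | AU i t => (t \in dterms D) &&
              cls N (castmx (dimL N, erefl 1%N) (lab N D (nL N) t) i 0)
  end.

End Datasets.

From Pilot Require Import Defs.
From HB Require Import structures.
From mathcomp Require Import all_boot all_order all_algebra.
From mathcomp Require Import boolp classical_sets reals.
From mathcomp.algebra_tactics Require Import lra.
Import Order.TTheory GRing.Theory Num.Theory.
Import Defs.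
Local Open Scope ring_scope.
Set Implicit Arguments.
Unset Strict Implicit.
Unset Printing Implicit Defensive.

(* Say that reals x, y are "equal or above a" when x = y, or x >= a and
   y >= a.  Write N' for the GNN with bounds C_l.  The capacity recursion
   computes thresholds alpha_L = thr, alpha_(L-1), ...; we prove by induction
   on n that the features of N and of N' at layer n are equal or above
   alpha_n.  At n = L this says that both features lie on the same side of
   thr, i.e. they are classified identically. *)

Section EqOrAbove.
Variable R : realDomainType.
Implicit Types a x y z : R.

Definition eq_or_above a x y : Prop := x = y \/ (a <= x /\ a <= y).

Lemma eq_or_above_trans a x y z :
  eq_or_above a x y -> eq_or_above a y z -> eq_or_above a x z.
Proof.
by move=> [->|[hx hy]] // [<-|[_ hz]]; right.
Qed.

Lemma eq_or_above_le a a' x y : a' <= a -> eq_or_above a x y -> eq_or_above a' x y.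
Proof. by move=> ha [->|[hx hy]]; [left | right; split; apply: le_trans ha _]. Qed.

(* For nonnegative summands the invariant is additive: if some summand pair
   differs, that summand alone already reaches a. *)
Lemma eq_or_above_add a x x' y y' : 0 <= x -> 0 <= x' -> 0 <= y -> 0 <= y' ->
  eq_or_above a x x' -> eq_or_above a y y' -> eq_or_above a (x + y) (x' + y').
Proof.
move=> hx hx' hy hy' [<-|[h1 h2]] [<-|[h3 h4]]; [by left | right; lra ..].
Qed.

Lemma eq_or_above_sum (I : finType) a (F F' : I -> R) :
  (forall i, 0 <= F i) -> (forall i, 0 <= F' i) ->
  (forall i, eq_or_above a (F i) (F' i)) ->
  eq_or_above a (\sum_i F i) (\sum_i F' i).
Proof.
move=> hF hF' hFF'.
pose P x y := [/\ eq_or_above a x y, 0 <= x & 0 <= y].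
suff [] : P (\sum_i F i) (\sum_i F' i) by [].
apply: (big_ind2 P); first by split; [left|..].
  move=> x1 x2 y1 y2 [h1 hx1 hx2] [h2 hy1 hy2].
  by split; [exact: eq_or_above_add | exact: addr_ge0 ..].
by move=> i _; split.
Qed.

Lemma eq_or_above_scale a w c x x' : 0 <= w -> c = 0 \/ w <= c ->
  0 <= x -> 0 <= x' -> eq_or_above a x x' -> eq_or_above (w * a) (c * x) (c * x').
Proof.
move=> hw [->|hc] hx hx' [->|[h1 h2]]; rewrite ?mul0r; [by left..| by left|].
by right; split; apply: le_trans (ler_wpM2l hw _) (ler_wpM2r _ hc).
Qed.

Lemma eq_or_above_shift a b0 b x x' : b0 <= b ->
  eq_or_above a x x' -> eq_or_above (a + b0) (x + b) (x' + b).
Proof. by move=> hb [->|[h1 h2]]; [left | right; split; apply: lerD]. Qed.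

Lemma eq_or_above_mono (f : R -> R) a x x' : {homo f : s t / s <= t} ->
  eq_or_above a x x' -> eq_or_above (f a) (f x) (f x').
Proof. by move=> hf [->|[h1 h2]]; [left | right; split; apply: hf]. Qed.

End EqOrAbove.

Section MaxSumFacts.
Variable R : realType.
Implicit Types (s t : seq R) (k : kpar).

Local Notation geR := (fun x y : R => y <= x).

Definition maxsum_count k s : nat :=
  match k with KFin n => n | KInf => size s end.

Lemma maxsumE k s : maxsum k s = \sum_(y <- take (maxsum_count k s) (sort geR s)) y.
Proof. by case: k => [n|] //=; rewrite take_oversize // size_sort. Qed.

Lemma sort_ge_sorted s : sorted geR (sort geR s).
Proof. by apply: sort_sorted => x y; rewrite orbC le_total. Qed.

Lemma sorted_ge_head a t y : sorted geR (a :: t) -> y \in a :: t -> y <= a.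
Proof.
move=> st; rewrite inE => /orP[/eqP -> // | yt].
by have /allP := order_path_min (fun _ _ _ h1 h2 => le_trans h2 h1) st; apply.
Qed.

Lemma sum_take_mono t c m : (forall y, y \in t -> 0 <= y) -> (c <= m)%N ->
  \sum_(y <- take c t) y <= \sum_(y <- take m t) y.
Proof.
move=> t0 cm; rewrite -[take m t](cat_take_drop c) take_takel // big_cat lerDl /=.
by rewrite big_seq sumr_ge0 // => y /mem_drop /mem_take /t0.
Qed.

Lemma sum_take_lower t c m : sorted geR t -> (forall y, y \in t -> 0 <= y) ->
  (c <= m)%N -> \sum_(y <- take c t) y != \sum_(y <- take m t) y ->
  exists2 z, z \in t & z != 0 /\ c%:R * z <= \sum_(y <- take c t) y.
Proof.
elim: t c m => [|a t IH] c m st t0 cm hne; first by rewrite !big_nil eqxx in hne.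
have a_max y : y \in t -> y <= a.
  by move=> yt; apply: sorted_ge_head st _; rewrite inE yt orbT.
have t0' y : y \in t -> 0 <= y by move=> yt; apply: t0; rewrite inE yt orbT.
case: c cm hne => [|c] cm hne.
  exists a; first exact: mem_head.
  split; last by rewrite mul0r big_nil.
  apply: contraNneq hne => a0; rewrite big_nil big_seq big1 // => y /mem_take.
  rewrite inE => /orP[/eqP -> //|yt].
  by apply/eqP; rewrite eq_le t0' // andbT -a0 a_max.
case: m cm hne => [|m] //= cm; rewrite !big_cons => hne.
have [|z zt [z0 hz]] := IH c m (path_sorted st) t0' cm.
  by apply: contraNneq hne => ->.
exists z; first by rewrite inE zt orbT.
split=> //; rewrite -addn1 natrD mulrDl mul1r addrC lerD //.
exact: a_max.
Qed.

Lemma maxsum_ge0 k s : (forall y, y \in s -> 0 <= y) -> 0 <= maxsum k s.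
Proof.
move=> s0; rewrite maxsumE big_seq sumr_ge0 // => y /mem_take.
by rewrite mem_sort => /s0.
Qed.

Lemma maxsum_count0 k s : maxsum_count k s = 0%N -> maxsum k s = 0.
Proof. by move=> k0; rewrite maxsumE k0 take0 big_nil. Qed.

Lemma maxsum_zero k s : (forall y, y \in s -> y = 0) -> maxsum k s = 0.
Proof.
move=> s0; rewrite maxsumE big_seq big1 // => y /mem_take.
by rewrite mem_sort => /s0.
Qed.

Lemma maxsum_ge_elem k s y : (0 < maxsum_count k s)%N ->
  (forall z, z \in s -> 0 <= z) -> y \in s -> y <= maxsum k s.
Proof.
rewrite maxsumE -(mem_sort geR); case: (maxsum_count k s) => // n _ s0.
have := sort_ge_sorted s; have ss0 z : z \in sort geR s -> 0 <= z.
  by rewrite mem_sort => /s0.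
case: (sort geR s) ss0 => // a t ss0 st ys; rewrite /= big_cons.
apply: le_trans (sorted_ge_head st ys) _; rewrite lerDl big_seq sumr_ge0 // => z.
by move/mem_take => zt; apply: ss0; rewrite inE zt orbT.
Qed.

Lemma maxsum_kmin k c s : maxsum k s = maxsum (KFin (kmin k c)) s \/
  (kmin k c = c /\ (c <= maxsum_count k s)%N).
Proof.
case: k => [n|]; rewrite /kmin.
  by case: (leqP n c) => nc; [left | right; rewrite ltnW].
case: (leqP c (size s)) => cs; first by right.
by left; rewrite !maxsumE /= !take_oversize ?size_sort // ltnW.
Qed.

Lemma eq_or_above_maxsum_trunc k s a xm c :
  (forall y, y \in s -> 0 <= y) -> (forall y, y \in s -> y != 0 -> xm <= y) ->
  0 <= xm -> a <= c%:R * xm ->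
  eq_or_above a (maxsum k s) (maxsum (KFin (kmin k c)) s).
Proof.
move=> s0 sxm xm0 ac.
have [-> | [-> ck]] := maxsum_kmin k c s; first by left.
have [-> | hne] := eqVneq (maxsum k s) (maxsum (KFin c) s); first by left.
have ss0 y : y \in sort geR s -> 0 <= y by rewrite mem_sort => /s0.
rewrite !maxsumE /= eq_sym in hne *.
have [z zs [z0 hz]] := sum_take_lower (sort_ge_sorted s) ss0 ck hne.
have hmono := sum_take_mono ss0 ck.
have : c%:R * xm <= c%:R * z.
  by apply: ler_wpM2l => //; apply: sxm; rewrite // -(mem_sort geR).
by right; lra.
Qed.

Lemma eq_or_above_maxsum_map (T : eqType) k a (us : seq T) (f f' : T -> R) :
  (forall u, 0 <= f u) -> (forall u, 0 <= f' u) ->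
  (forall u, eq_or_above a (f u) (f' u)) ->
  eq_or_above a (maxsum k (map f us)) (maxsum k (map f' us)).
Proof.
move=> f0 f'0 ff'.
case: (boolP (all (fun u => f u == f' u) us)) => [/allP e | /allPn [u uus ne]].
  by left; congr maxsum; apply/eq_in_map => u /e /eqP.
have [e | [h1 h2]] := ff' u; first by rewrite e eqxx in ne.
have cnt : maxsum_count k (map f' us) = maxsum_count k (map f us).
  by case: k => //=; rewrite !size_map.
have [c0 | cpos] := posnP (maxsum_count k (map f us)).
  by left; rewrite !maxsum_count0 ?cnt.
have nonneg (g : T -> R) : (forall u, 0 <= g u) -> forall y, y \in map g us -> 0 <= y.
  by move=> g0 y /mapP [v _ ->].
right; split; first exact: le_trans h1 (maxsum_ge_elem cpos (nonneg f f0) (map_f f uus)).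
by apply: le_trans h2 (maxsum_ge_elem _ (nonneg f' f'0) (map_f f' uus)); rewrite cnt.
Qed.

End MaxSumFacts.

Section Layer.
Variables (R : realType) (Col : finType) (d : nat) (T : eqType).
Implicit Types (A : 'I_d -> R) (B : Col -> 'I_d -> R) (x : 'I_d -> R)
  (f : T -> 'I_d -> R) (us : Col -> seq T).

Definition layer_value A B (b : R) (k : kpar) us x f : R :=
  \sum_j A j * x j + \sum_c \sum_j B c j * maxsum k [seq f u j | u <- us c] + b.

Lemma layer_value_zero_weights A B b k us x f :
  (forall j, A j = 0) -> (forall c j, B c j = 0) -> layer_value A B b k us x f = b.
Proof.
move=> A0 B0; rewrite /layer_value big1 => [|j _]; last by rewrite A0 mul0r.
by rewrite big1 ?add0r // => c _; apply: big1 => j _; rewrite B0 mul0r.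
Qed.

Lemma layer_value_agg0 A B b k us x f :
  (forall c j, maxsum k [seq f u j | u <- us c] = 0) ->
  layer_value A B b k us x f = \sum_j A j * x j + b.
Proof.
move=> agg0; rewrite /layer_value [X in _ + X + _]big1 ?addr0 // => c _.
by apply: big1 => j _; rewrite agg0 mulr0.
Qed.

Lemma layer_value_zero_inputs A B b k us x f :
  (forall j, x j = 0) -> (forall u j, f u j = 0) -> layer_value A B b k us x f = b.
Proof.
move=> x0 f0; rewrite layer_value_agg0 => [|c j]; last first.
  by rewrite maxsum_zero // => y /mapP [u _ ->].
by rewrite big1 ?add0r // => j _; rewrite x0 mulr0.
Qed.

Lemma eq_or_above_layer A B b b0 k cap us x x' f f' (w xm a : R) :
  0 <= w -> (forall j, A j = 0 \/ w <= A j) -> (forall c j, B c j = 0 \/ w <= B c j) ->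
  (forall j, 0 <= x j) -> (forall j, 0 <= x' j) ->
  (forall u j, 0 <= f u j) -> (forall u j, 0 <= f' u j) ->
  (forall j, eq_or_above a (x j) (x' j)) -> (forall u j, eq_or_above a (f u j) (f' u j)) ->
  0 <= xm -> (forall u j, f u j != 0 -> xm <= f u j) -> a <= cap%:R * xm -> b0 <= b ->
  eq_or_above (w * a + b0) (layer_value A B b k us x f)
    (layer_value A B b (KFin (kmin k cap)) us x' f').
Proof.
move=> w0 Aw Bw x0 x'0 f0 f'0 xx' ff' xm0 fxm axm bb0.
have nonneg_weight (e : R) : e = 0 \/ w <= e -> 0 <= e.
  by case=> [-> // | /(le_trans w0)].
have f_nonneg (g : T -> 'I_d -> R) c j :
    (forall u j, 0 <= g u j) -> forall y, y \in [seq g u j | u <- us c] -> 0 <= y.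
  by move=> g0 y /mapP [u _ ->].
have agg c j : eq_or_above a (maxsum k [seq f u j | u <- us c])
    (maxsum (KFin (kmin k cap)) [seq f' u j | u <- us c]).
  have fs_xm y : y \in [seq f u j | u <- us c] -> y != 0 -> xm <= y.
    by move=> /mapP [u _ ->]; apply: fxm.
  apply: eq_or_above_trans (eq_or_above_maxsum_trunc k (f_nonneg f c j f0) fs_xm xm0 axm) _.
  by apply: eq_or_above_maxsum_map => u; [exact: f0 | exact: f'0 | exact: ff'].
have Bterm k' (g : T -> 'I_d -> R) c j : (forall u j, 0 <= g u j) ->
    0 <= B c j * maxsum k' [seq g u j | u <- us c].
  by move=> g0; apply: mulr_ge0; [exact/nonneg_weight/Bw | exact/maxsum_ge0/f_nonneg].
have Aterm (z : 'I_d -> R) j : (forall j, 0 <= z j) -> 0 <= A j * z j.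
  by move=> z0; apply: mulr_ge0; [exact/nonneg_weight/Aw | exact: z0].
apply: eq_or_above_shift => //; apply: eq_or_above_add.
- by apply: sumr_ge0 => j _; apply: Aterm.
- by apply: sumr_ge0 => j _; apply: Aterm.
- by do 2 (apply: sumr_ge0 => ? _); apply: Bterm.
- by do 2 (apply: sumr_ge0 => ? _); apply: Bterm.
- apply: eq_or_above_sum => [j|j|j]; [exact: Aterm | exact: Aterm |].
  exact: eq_or_above_scale.
apply: eq_or_above_sum => [c|c|c]; [by apply: sumr_ge0 => j _; apply: Bterm ..|].
apply: eq_or_above_sum => [j|j|j]; [exact: Bterm | exact: Bterm |].
by apply: eq_or_above_scale; rewrite ?maxsum_ge0 //; apply: f_nonneg.
Qed.

End Layer.

Lemma layer_value_map (R : realType) (Col : finType) (d : nat) (T T' : eqType)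
    (A : 'I_d -> R) (B : Col -> 'I_d -> R) (b : R) (k : kpar) (us : Col -> seq T')
    (g : T' -> T) (x : 'I_d -> R) (f : T -> 'I_d -> R) :
  layer_value A B b k (fun c => map g (us c)) x f =
  layer_value A B b k us x (fun u => f (g u)).
Proof.
rewrite /layer_value; congr (_ + _ + _); apply: eq_bigr => c _.
by apply: eq_bigr => j _; rewrite -map_comp.
Qed.

Local Open Scope classical_set_scope.

Section LocallyFinite.
Variable R : realType.
Implicit Types (S : set R) (s r : seq R).

Definition lfinite S : Prop :=
  forall M : R, exists s : seq R, forall y, S y -> y <= M -> y \in s.

Lemma seq_min s y0 : y0 \in s -> exists2 m, m \in s & forall y, y \in s -> m <= y.
Proof.
elim: s y0 => [|a s IH] y0 // _.
case: s IH => [|b s] IH.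
  by exists a; rewrite ?mem_head // => y; rewrite inE => /eqP ->.
have [m ms m_min] := IH b (mem_head b s).
case: (leP a m) => am.
  exists a; first exact: mem_head.
  by move=> y; rewrite inE => /orP[/eqP -> // | /m_min]; apply: le_trans.
exists m; first by rewrite inE ms orbT.
by move=> y; rewrite inE => /orP[/eqP -> | /m_min //]; exact: ltW.
Qed.

Lemma lfinite_sub S S' : S `<=` S' -> lfinite S' -> lfinite S.
Proof. by move=> sub hS' M; have [s hs] := hS' M; exists s => y /sub /hs. Qed.

Lemma lfinite_setU S1 S2 : lfinite S1 -> lfinite S2 -> lfinite (S1 `|` S2).
Proof.
move=> h1 h2 M; have [s1 hs1] := h1 M; have [s2 hs2] := h2 M.
exists (s1 ++ s2) => y [Sy|Sy] yM; rewrite mem_cat; apply/orP.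
  by left; exact: hs1.
by right; exact: hs2.
Qed.

Lemma lfinite_bigcup (I : finType) (S : I -> set R) :
  (forall i, lfinite (S i)) -> lfinite [set y | exists i, S i y].
Proof.
move=> hS M; have [g hg] := choice (fun i => hS i M).
exists (flatten [seq g i | i <- enum I]) => y [i hy] hyM.
by apply/flattenP; exists (g i); [apply: map_f; rewrite mem_enum | exact: hg].
Qed.

Lemma lfinite_range (I : finType) (F : I -> R) : lfinite (range F).
Proof. by move=> M; exists (map F (enum I)) => _ [i _ <-] _; rewrite map_f ?mem_enum. Qed.

Lemma lfinite_image (f : R -> R) S :
  (forall M, exists t, forall y, f y <= M -> y <= t) -> lfinite S -> lfinite (f @` S).
Proof.
move=> hf hS M; have [t ht] := hf M; have [s hs] := hS t.
by exists (map f s) => _ [y Sy <-] fyM; apply/map_f/hs/ht.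
Qed.

Lemma lfinite_scale (a : R) S : 0 <= a -> lfinite S -> lfinite ( *%R a @` S).
Proof.
move=> a0 hS; have [-> | a_neq0] := eqVneq a 0.
  by exists [:: 0] => _ [y _ <-] _; rewrite mul0r mem_head.
have a_gt0 : 0 < a by rewrite lt_def a_neq0.
by apply: lfinite_image => // M; exists (M / a) => y; rewrite ler_pdivlMr // mulrC.
Qed.

Lemma lfinite_shift (b : R) S : lfinite S -> lfinite ( +%R^~ b @` S).
Proof. by apply: lfinite_image => M; exists (M - b) => y; rewrite lerBrDr. Qed.

Lemma lfinite_mono (f : R -> R) S : {homo f : x y / x <= y} ->
  (forall M, exists t, M < f t) -> lfinite S -> lfinite (f @` S).
Proof.
move=> f_mono f_unb; apply: lfinite_image => M; have [t Mt] := f_unb M.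
exists t => y fyM; rewrite leNgt; apply/negP => /ltW /f_mono; rewrite leNgt.
by rewrite (le_lt_trans fyM Mt).
Qed.

Definition sumset S : set R :=
  [set z | exists2 r : seq R, (forall y, y \in r -> S y) & z = \sum_(y <- r) y].

Fixpoint sums_upto (n : nat) (L : seq R) : seq R :=
  if n is n'.+1 then 0 :: [seq a + z | a <- L, z <- sums_upto n' L] else [:: 0].

Lemma sums_uptoP r n L : (size r <= n)%N -> (forall y, y \in r -> y \in L) ->
  \sum_(y <- r) y \in sums_upto n L.
Proof.
elim: r n => [|a r IH] [|n] //= rn rL; rewrite ?big_nil ?mem_head // big_cons.
rewrite inE; apply/orP; right; apply: allpairs_f; first by rewrite rL ?mem_head.
by apply: IH => // y yr; rewrite rL // inE yr orbT.
Qed.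

Lemma elem_le_sum r y : (forall z, z \in r -> 0 <= z) -> y \in r -> y <= \sum_(z <- r) z.
Proof.
elim: r => [|a r IH] // r0; rewrite inE big_cons => /orP[/eqP -> | yr].
  by rewrite lerDl big_seq sumr_ge0 // => z zr; rewrite r0 // inE zr orbT.
have a0 : 0 <= a by rewrite r0 ?mem_head.
by rewrite -[y]add0r lerD // IH // => z zr; rewrite r0 // inE zr orbT.
Qed.

Lemma size_le_sum r m : (forall z, z \in r -> m <= z) -> (size r)%:R * m <= \sum_(z <- r) z.
Proof.
elim: r => [|a r IH] rm; first by rewrite big_nil mul0r.
rewrite big_cons /= -addn1 natrD mulrDl mul1r addrC lerD ?rm ?mem_head //.
by apply: IH => z zr; rewrite rm // inE zr orbT.
Qed.

(* A sum below M has at most M / m positive summands, m the least positive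
   element of S below M, each drawn from the finitely many such elements. *)
Lemma lfinite_sumset S : (forall y, S y -> 0 <= y) -> lfinite S -> lfinite (sumset S).
Proof.
move=> S0 hS M; have [s hs] := hS M.
pose q := [seq y <- s | 0 < y].
have [m mq m_min] := seq_min (mem_head 1 q).
have m0 : 0 < m by move: mq; rewrite inE mem_filter => /orP[/eqP -> // | /andP[]].
pose n := Num.bound `|M / m|.
exists (sums_upto n q) => _ [r rS ->] rM.
have r0 y : y \in r -> 0 <= y by move/rS/S0.
pose r' := [seq y <- r | 0 < y].
have sum_r' : \sum_(y <- r) y = \sum_(y <- r') y.
  rewrite big_filter [RHS]big_mkcond !big_seq; apply: eq_bigr => y yr.
  by case: ifPn => // /negbTE; rewrite lt_def r0 // andbT => /negbFE /eqP.
rewrite sum_r' in rM *.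
have r'_q y : y \in r' -> y \in q.
  rewrite !mem_filter => /andP[y0 yr]; rewrite y0 /=; apply: hs; first exact: rS.
  apply: le_trans _ rM; apply: elem_le_sum; last by rewrite mem_filter y0.
  by move=> z; rewrite mem_filter => /andP[/ltW].
apply: sums_uptoP => //.
have size_m : (size r')%:R * m <= M.
  apply: le_trans _ rM; apply: size_le_sum => y /r'_q yq.
  by apply: m_min; rewrite inE yq orbT.
have Mn : M / m < n%:R := le_lt_trans (ler_norm _) (archi_boundP (normr_ge0 _)).
rewrite leqNgt; apply/negP => /ltnW nr.
have : n%:R * m <= M by apply: le_trans _ size_m; rewrite ler_wpM2r ?ler_nat // ltW.
by rewrite -ler_pdivlMr // leNgt Mn.
Qed.

Lemma sumset0 S : sumset S 0.
Proof. by exists [::]; rewrite ?big_nil. Qed.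

Lemma sumset1 S y : S y -> sumset S y.
Proof. by move=> Sy; exists [:: y]; rewrite ?big_seq1 // => z; rewrite inE => /eqP ->. Qed.

Lemma sumsetD S x y : sumset S x -> sumset S y -> sumset S (x + y).
Proof.
move=> [r1 r1S ->] [r2 r2S ->]; exists (r1 ++ r2); last by rewrite big_cat.
by move=> z; rewrite mem_cat => /orP[/r1S | /r2S].
Qed.

Lemma sumset_sum S (I : finType) (F : I -> R) : (forall i, sumset S (F i)) ->
  sumset S (\sum_i F i).
Proof. by move=> SF; apply: big_ind => //; [exact: sumset0 | exact: sumsetD]. Qed.

Lemma maxsum_sumset S k s : (forall y, y \in s -> S y) -> sumset S (maxsum k s).
Proof.
move=> sS; rewrite maxsumE.
exists (take (maxsum_count k s) (sort (fun x y : R => y <= x) s)) => //.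
by move=> y /mem_take; rewrite mem_sort => /sS.
Qed.

Lemma least_nzP S : match least_nz S with
  | Some x => is_least_nz S x | None => forall x, ~ is_least_nz S x end.
Proof.
rewrite /least_nz; case: xgetP => [o -> [x [-> hx]] // | none_least].
by move=> x hx; apply: (none_least (Some x)); exists x.
Qed.

Lemma least_nz_Some S x : least_nz S = Some x -> is_least_nz S x.
Proof. by move=> e; have := least_nzP S; rewrite e. Qed.

Lemma lfinite_least_nz S y0 : lfinite S -> S y0 -> y0 != 0 -> exists x, is_least_nz S x.
Proof.
move=> hS Sy0 y0_neq0; have [s hs] := hS y0.
pose s' := [seq y <- s | `[< S y >] && (y != 0)].
have y0s' : y0 \in s'.
  by rewrite mem_filter y0_neq0 (hs _ Sy0 (lexx _)) !andbT; exact/asboolP.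
have [m] := seq_min y0s'; rewrite mem_filter => /andP[/andP[/asboolP Sm m0] _] m_min.
exists m; split=> //; split=> // y Sy y0'; have [yy0 | y0y] := leP y y0.
  by apply: m_min; rewrite mem_filter y0' (hs _ Sy yy0) !andbT; exact/asboolP.
exact: le_trans (m_min _ y0s') (ltW y0y).
Qed.

Lemma least_nz_None S : lfinite S -> least_nz S = None -> forall y, S y -> y = 0.
Proof.
move=> hS none y Sy; apply/eqP; apply: contraT => y0.
have [x hx] := lfinite_least_nz hS Sy y0.
by have := least_nzP S; rewrite none => /(_ x).
Qed.

End LocallyFinite.

Lemma le_int2nat_ceil (R : realType) (r : R) : r <= (int2nat (Num.ceil r))%:R.
Proof.
have := ceil_ge r; case: (Num.ceil r) => n //= r_le.
by apply: le_trans r_le _; rewrite NegzE mulrNz lerNl oppr0 ler0z.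
Qed.

Lemma least_natP (P : nat -> Prop) : (exists n, P n) -> P (least_nat P).
Proof.
move=> [n Pn]; have [|m /asboolP Pm m_min] := @ex_minnP (fun n => `[< P n >]).
  by exists n; exact/asboolP.
have ex : exists m, P m /\ forall m', P m' -> (m <= m')%N.
  by exists m; split=> // m' /asboolP /m_min.
by have [] := xgetPex 0%N ex.
Qed.

Section GNNFacts.
Variables (R : realType) (Col : finType) (delta : nat) (Tm : eqType).
Implicit Types (N : msgnn R Col delta) (D : dataset Col delta Tm).

Definition nbrs D (v : Tm) (c : Col) : seq Tm := [seq u <- dterms D | encE D c v u].

Definition Xall N l : set R := [set y | exists j, @Xs R Col delta N l j y].

Lemma preactE N l (x : 'cV[R]_(dim N l)) Y (i : 'I_(dim N l.+1)) :
  preact x Y i 0 = layer_value (fun j => Amx N l i j) (fun c j => Bmx N l c i j)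
    (bias N l i 0) (kagg N l) Y (fun j => x j 0) (fun y j => y j 0).
Proof.
rewrite /preact /layer_value mxE [in LHS]mxE summxE; congr (_ + _ + _).
  by rewrite mxE.
by apply: eq_bigr => c _; rewrite mxE; apply: eq_bigr => j _; rewrite /aggvec mxE.
Qed.

Lemma lab_succE N D n v (i : 'I_(dim N n.+1)) :
  lab N D n.+1 v i 0 = sigma N (layer_value (fun j => Amx N n i j)
    (fun c j => Bmx N n c i j) (bias N n i 0) (kagg N n) (nbrs D v)
    (fun j => lab N D n v j 0) (fun u j => lab N D n u j 0)).
Proof. by rewrite /= mxE preactE layer_value_map. Qed.

Lemma sigma_ge0 N : monotonic N -> forall t, 0 <= sigma N t.
Proof. by case=> _ _ _ rng t; apply/rng; exists t. Qed.

Lemma Xs_ge0 N l j y : (forall t, 0 <= sigma N t) -> @Xs R Col delta N l j y -> 0 <= y.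
Proof. by move=> s0; case: l j => [|l] j /=; [case=> -> | case=> x [Y [_ [_ ->]]]]. Qed.

Lemma lab_ge0 N D l v j : (forall t, 0 <= sigma N t) -> 0 <= lab N D l v j 0.
Proof.
by move=> s0; case: l j => [|l] j /=; rewrite ?castmxE mxE //; case: ifP.
Qed.

Lemma lab_in_X N D l v j : @Xs R Col delta N l j (lab N D l v j 0).
Proof.
elim: l v j => [|l IH] v j /=; first by rewrite castmxE mxE; case: ifP; [right | left].
exists (lab N D l v), (fun c => [seq lab N D l u | u <- nbrs D v c]).
split=> [j'|]; first exact: IH.
by split=> [c y /mapP [u _ ->] j'|]; [exact: IH | rewrite mxE].
Qed.

(* a network that aggregates nothing below layer m computes features in the
   X_l of N, witnessed by empty neighbour multisets *)
Lemma lab_trivial_in_X N D kk m : (forall l, (l < m)%N -> kk l = KFin 0) ->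
  forall l, (l <= m)%N -> forall v j, @Xs R Col delta N l j (lab (with_k N kk) D l v j 0).
Proof.
move=> kk0; elim=> [|l IH] lm v j /=; first by rewrite castmxE mxE; case: ifP; [right | left].
exists (lab (with_k N kk) D l v), (fun _ => [::]).
split=> [j'|]; first exact: IH (ltnW lm) v j'.
split=> //; rewrite mxE; congr (sigma N _).
rewrite (@preactE (with_k N kk)) preactE /= !layer_value_agg0 // => c j' /=.
  exact: maxsum_zero.
by rewrite kk0 // maxsum_count0.
Qed.

(* X_l is locally finite: it is built from {0,1} by finite unions,
   nonnegative scalings, finite sums, shifts and the activation. *)
Lemma lfinite_X N : monotonic N -> forall l, (l <= nL N)%N -> lfinite (Xall N l).
Proof.
move=> mono; have [hAB hmon hunb _] := mono; have s0 := sigma_ge0 mono.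
elim=> [|l IH] hl.
  by move=> M; exists [:: 0; 1] => y [j [->|->]] _; rewrite !inE eqxx ?orbT.
have [hA hB] := hAB l hl; have hX := IH (ltnW hl).
have X0 y : Xall N l y -> 0 <= y by case=> j; apply: Xs_ge0.
pose SA i := [set z | exists j, ( *%R (Amx N l i j) @` Xall N l) z].
pose SB i := [set z | exists c j, ( *%R (Bmx N l c i j) @` sumset (Xall N l)) z].
apply: lfinite_bigcup => i.
apply: (@lfinite_sub _ _ (sigma N @` (+%R^~ (bias N l i 0) @` sumset (SA i `|` SB i)))).
  move=> _ [x [Y [hx [hY ->]]]]; rewrite preactE /layer_value.
  apply: imageP; apply: imageP; apply: sumsetD.
    apply: sumset_sum => j; apply: sumset1; left; exists j; apply: imageP.
    by exists j; apply: hx.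
  apply: sumset_sum => c; apply: sumset_sum => j; apply: sumset1; right.
  exists c, j; apply: imageP.
  by apply: maxsum_sumset => _ /mapP [y yY ->]; exists j; exact: hY c y yY j.
apply: lfinite_mono => //; apply: lfinite_shift; apply: lfinite_sumset.
  move=> _ [[j [y Xy <-]] | [c [j [y Sy <-]]]]; apply: mulr_ge0 => //.
    exact: X0.
  by case: Sy => r rX ->; rewrite big_seq sumr_ge0 // => z /rX /X0.
apply: lfinite_setU; apply: lfinite_bigcup => j; first exact: lfinite_scale.
apply: lfinite_bigcup => ?; apply: lfinite_scale => //.
exact: lfinite_sumset.
Qed.

Lemma bmin_le N l i : bmin N l <= bias N l i 0.
Proof.
have i_in : bias N l i 0 \in [seq bias N l j 0 | j <- enum 'I_(dim N l.+1)].
  by apply: (map_f (fun j => bias N l j 0)); rewrite mem_enum.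
have [_ /mapP [j0 _ ->] min_j0] := seq_min i_in.
have ex : exists m, (exists i, bias N l i 0 = m) /\ forall i, m <= bias N l i 0.
  by exists (bias N l j0 0); split=> [|i']; [exists j0 | apply/min_j0/map_f/mem_enum].
by have [_] := xgetPex 0 ex.
Qed.

(* beta exists by unboundedness of sigma, so sigma(beta) >= alpha *)
Lemma le_sigma_least_nat N (alpha : R) : monotonic N ->
  alpha <= sigma N (least_nat (fun m => (0 < m)%N /\ alpha <= sigma N m%:R))%:R.
Proof.
case=> _ hmon hunb _; pose P m := (0 < m)%N /\ alpha <= sigma N m%:R.
suff [] : P (least_nat P) by [].
apply: least_natP; have [t alpha_t] := hunb alpha.
exists (Num.bound `|t|).+1; split=> //; apply: le_trans (ltW alpha_t) (hmon _ _ _).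
apply: le_trans (ler_norm t) (ltW (lt_le_trans (archi_boundP (normr_ge0 t)) _)).
by rewrite ler_nat.
Qed.

Lemma wmin_None N l : (forall i j, 0 <= Amx N l i j) -> (forall c i j, 0 <= Bmx N l c i j) ->
  wmin N l = None -> (forall i j, Amx N l i j = 0) /\ (forall c i j, Bmx N l c i j = 0).
Proof.
move=> hA hB none.
pose F1 (ij : 'I_(dim N l.+1) * 'I_(dim N l)) := Amx N l ij.1 ij.2.
pose F2 (cij : Col * ('I_(dim N l.+1) * 'I_(dim N l))) := Bmx N l cij.1 cij.2.1 cij.2.2.
have fin : lfinite [set x | (exists i j, Amx N l i j = x) \/ (exists c i j, Bmx N l c i j = x)].
  apply: (@lfinite_sub _ _ (range F1 `|` range F2)); last first.
    by apply: lfinite_setU; apply: lfinite_range.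
  by move=> _ [[i [j <-]] | [c [i [j <-]]]]; [left; exists (i, j) | right; exists (c, (i, j))].
have zero := least_nz_None fin none.
by split=> [i j | c i j]; apply: zero; [left; exists i, j | right; exists c, i, j].
Qed.

End GNNFacts.

Section Main.
Variables (R : realType) (Col : finType) (delta : nat) (Tm : eqType).
Implicit Types (N : msgnn R Col delta) (D : dataset Col delta Tm).

Lemma lab_step_eq_or_above N D n kk alpha w xm : monotonic N -> (n < nL N)%N ->
  wmin N n = Some w -> xmin N n = Some xm ->
  let beta := least_nat (fun m => (0 < m)%N /\ alpha <= sigma N m%:R) in
  let alpha' := (beta%:R - bmin N n) / w in
  kk n = KFin (kmin (kagg N n) (int2nat (Num.ceil ((beta%:R - bmin N n) / (w * xm))))) ->
  (forall v j, eq_or_above alpha' (lab N D n v j 0) (lab (with_k N kk) D n v j 0)) ->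
  forall v i, eq_or_above alpha (lab N D n.+1 v i 0) (lab (with_k N kk) D n.+1 v i 0).
Proof.
move=> mono hn Ew Ex beta alpha' kkn IHn v i.
have [hAB hmon _ _] := mono; have s0 := sigma_ge0 mono; have [hA hB] := hAB n hn.
have [w_in [w_neq0 w_min]] := least_nz_Some Ew.
have [[j0 xm_in] [xm_neq0 xm_min]] := least_nz_Some Ex.
have w_pos : 0 < w.
  rewrite lt_def w_neq0; case: w_in => [[i' [j' <-]] | [c [i' [j' <-]]]].
    exact: hA.
  exact: hB.
have xm_pos : 0 < xm by rewrite lt_def xm_neq0 (Xs_ge0 s0 xm_in).
have beta_eq : beta%:R = w * alpha' + bmin N n.
  by rewrite /alpha' mulrC divfK ?subrK ?gt_eqF.
apply: eq_or_above_le (le_sigma_least_nat alpha mono) _.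
have -> : sigma N beta%:R = sigma N (w * alpha' + bmin N n) by rewrite beta_eq.
rewrite !lab_succE /= kkn; apply: eq_or_above_mono => //.
apply: (eq_or_above_layer _ _ (ltW w_pos) _ _ _ _ _ _ (IHn v) IHn (ltW xm_pos)).
- move=> j; have [-> | Aj] := eqVneq (Amx N n i j) 0; [by left | right].
  by apply: w_min => //; left; exists i, j.
- move=> c j; have [-> | Bj] := eqVneq (Bmx N n c i j) 0; [by left | right].
  by apply: w_min => //; right; exists c, i, j.
- by move=> j; apply: lab_ge0.
- by move=> j; exact: (@lab_ge0 _ _ _ _ (with_k N kk) D n v j s0).
- by move=> u j; apply: lab_ge0.
- by move=> u j; exact: (@lab_ge0 _ _ _ _ (with_k N kk) D n u j s0).
- by move=> u j lab_neq0; apply: xm_min => //; exists j; apply: lab_in_X.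
- have cap_ge := le_int2nat_ceil ((beta%:R - bmin N n) / (w * xm)).
  have -> : alpha' = (beta%:R - bmin N n) / (w * xm) * xm.
    by rewrite /alpha' invfM mulrA mulfVK ?gt_eqF.
  by rewrite ler_wpM2r // ltW.
exact: bmin_le.
Qed.

Lemma lab_eq_or_above N D : monotonic N -> forall n, (n <= nL N)%N ->
  forall alpha kk, (forall l, (l < n)%N -> kk l = KFin (caps N n alpha l.+1)) ->
  forall v (i : 'I_(dim N n)),
    eq_or_above alpha (lab N D n v i 0) (lab (with_k N kk) D n v i 0).
Proof.
move=> mono; elim=> [|n IH] hn alpha kk hkk v i; first by left.
move: hkk; cbn [caps].
case Ew: (wmin N n) => [w|].
  case Ex: (xmin N n) => [xm|] /= hkk.
    apply: (lab_step_eq_or_above mono hn Ew Ex); first by rewrite hkk // eqxx.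
    by apply: IH (ltnW hn) _ _ _ => l ln; rewrite hkk ?eqSS ?ltn_eqF // ltnW.
  have X0 := least_nz_None (lfinite_X mono (ltnW hn)) Ex.
  have kk0 l : (l < n)%N -> kk l = KFin 0 by move=> ln; rewrite hkk // ltnW.
  have lab0 u j : lab N D n u j 0 = 0 by apply: X0; exists j; apply: lab_in_X.
  have lab0' u j : lab (with_k N kk) D n u j 0 = 0.
    by apply: X0; exists j; exact: (@lab_trivial_in_X _ _ _ _ N D kk n kk0 n (leqnn n)).
  left; rewrite lab_succE (@lab_succE _ _ _ _ (with_k N kk)).
  by rewrite !layer_value_zero_inputs.
have [hAB _ _ _] := mono; have [hA hB] := hAB n hn.
have [A0 B0] := wmin_None hA hB Ew.
have Ai0 j : Amx N n i j = 0 := A0 i j; have Bi0 c j : Bmx N n c i j = 0 := B0 c i j.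
move=> _; left; rewrite lab_succE (@lab_succE _ _ _ _ (with_k N kk)).
by rewrite !layer_value_zero_weights.
Qed.

End Main.

Local Close Scope classical_set_scope.
Unset Implicit Arguments.

(* At the last layer the threshold is thr, so both GNNs classify alike. *)
Theorem theorem2 (R : realType) (Col : finType) (delta : nat) (Tm : eqType)
    (N : msgnn R Col delta) :
  (1 <= nL N)%N -> monotonic N ->
  forall D : dataset Col delta Tm,
    forall a : atom Col delta Tm, TN N D a = TN (capGNN N) D a.
Proof.
move=> _ mono D [c t s | i t] //=; congr (_ && _).
have := @lab_eq_or_above _ _ _ _ N D mono (nL N) (leqnn _) (thr N)
  (fun l => KFin (capacity N l.+1)) (fun l _ => erefl) t (cast_ord (esym (dimL N)) i).
rewrite /cls !castmxE cast_ord_id.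
by case=> [-> // | [thr_le thr_le']]; rewrite thr_le thr_le'.
Qed.
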